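(* Let $A:\mathbb{R}^d\rightrightarrows\mathbb{R}^d$ be maximal monotone with $A^{-1}(0)\neq\emptyset$, let $p\geq1$ be an integer, $\sigma\in(0,1)$, $\theta>0$, $x_0\in\mathbb{R}^d$, and suppose $\lambda_k>0$, $y_k,v_k,x_k\in\mathbb{R}^d$, $\epsilon_k\geq0$ satisfy for every $k\geq0$: $v_{k+1}\in A^{\epsilon_{k+1}}(y_{k+1})$, $\|\lambda_{k+1}v_{k+1}+y_{k+1}-x_k\|^2+2\lambda_{k+1}\epsilon_{k+1}\leq\sigma^2\|y_{k+1}-x_k\|^2$, $\lambda_{k+1}\|y_{k+1}-x_k\|^{p-1}\geq\theta$, and $x_{k+1}=x_k-\lambda_{k+1}v_{k+1}$. Then for every integer $k\geq1$, \[ \inf_{1\leq i\leq k}\sqrt{\lambda_i}\|v_i\|\leq\sqrt{\tfrac{1+\sigma}{1-\sigma}}\Big(\sum_{i=1}^k\lambda_i\Big)^{-\frac12}\inf_{z^\star\in A^{-1}(0)}\|x_0-z^\star\|, \] \[ \inf_{1\leq i\leq k}\epsilon_i\leq\frac{\sigma^2}{2(1-\sigma^2)}\Big(\sum_{i=1}^k\lambda_i\Big)^{-1}\inf_{z^\star\in A^{-1}(0)}\|x_0-z^\star\|^2. \]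
   Context: The $\epsilon$-enlargement is $A^{\epsilon}(x)=\{v\in\mathbb{R}^d:\langle x-\tilde x,v-\tilde v\rangle\geq-\epsilon\ \forall\tilde x\in\mathbb{R}^d,\ \forall\tilde v\in A\tilde x\}$. *)

From HB Require Import structures.
From mathcomp Require Import all_boot all_order all_algebra.
From mathcomp Require Import boolp classical_sets reals.
Set Implicit Arguments. Unset Strict Implicit. Unset Printing Implicit Defensive.
Import Order.TTheory GRing.Theory Num.Theory.
Local Open Scope ring_scope.

Definition dotv (R : realType) (d : nat) (u w : 'rV[R]_d) : R :=
  \sum_(i < d) u 0 i * w 0 i.
Definition enorm (R : realType) (d : nat) (u : 'rV[R]_d) : R :=
  Num.sqrt (dotv u u).

(* A set-valued operator A : R^d ⇉ R^d, given by its graph: A x v <-> v ∈ A x *)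
Definition setop (R : realType) (d : nat) := 'rV[R]_d -> 'rV[R]_d -> Prop.

Definition monotone (R : realType) (d : nat) (A : setop R d) : Prop :=
  forall x y u w, A x u -> A y w -> 0 <= dotv (x - y) (u - w).

Definition maximal_monotone (R : realType) (d : nat) (A : setop R d) : Prop :=
  monotone A /\
  forall B : setop R d, monotone B -> (forall x v, A x v -> B x v) ->
    forall x v, B x v -> A x v.

Definition enlargement (R : realType) (d : nat) (A : setop R d) (eps : R)
  (x v : 'rV[R]_d) : Prop :=
  forall xt vt, A xt vt -> dotv (x - xt) (v - vt) >= - eps.

(** For a zero [z] of [A], the enlargement inclusion gives
    [<y_{k+1} - z, v_{k+1}> >= - eps_{k+1}], which together with the relative
    error criterion makes [||x_k - z||^2] decrease by at least
    [(1 - sigma^2) ||y_{k+1} - x_k||^2]; hence these gaps sum to at most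
    [||x_0 - z||^2 / (1 - sigma^2)].  The error criterion also bounds
    [lam_i^2 ||v_i||^2] by [(1 + sigma)^2] times the gap and [2 lam_i eps_i]
    by [sigma^2] times the gap, so the [lam]-weighted means of
    [lam_i ||v_i||^2] and of [eps_i] are bounded.  A minimum lies below any
    weighted mean, and the index attaining it does not depend on [z]. *)
From HB Require Import structures.
From mathcomp Require Import all_boot all_order all_algebra.
From mathcomp Require Import boolp classical_sets reals.
From mathcomp Require Import ring lra.
Set Implicit Arguments. Unset Strict Implicit. Unset Printing Implicit Defensive.
Import Order.TTheory GRing.Theory Num.Theory.
Local Open Scope ring_scope.
Local Open Scope classical_set_scope.

Section InnerProduct.
Variables (R : realType) (d : nat).
Implicit Types (u w z : 'rV[R]_d) (a s : R).

Lemma dotvC u w : dotv u w = dotv w u.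
Proof. by apply: eq_bigr => i _; rewrite mulrC. Qed.

Lemma dotvDl u w z : dotv (u + w) z = dotv u z + dotv w z.
Proof. by rewrite /dotv -big_split; apply: eq_bigr => i _; rewrite mxE mulrDl. Qed.

Lemma dotvDr u w z : dotv z (u + w) = dotv z u + dotv z w.
Proof. by rewrite dotvC dotvDl !(dotvC z). Qed.

Lemma dotvZl a u w : dotv (a *: u) w = a * dotv u w.
Proof. by rewrite /dotv mulr_sumr; apply: eq_bigr => i _; rewrite mxE mulrA. Qed.

Lemma dotvZr a u w : dotv w (a *: u) = a * dotv w u.
Proof. by rewrite dotvC dotvZl dotvC. Qed.

Lemma dotvNl u w : dotv (- u) w = - dotv u w.
Proof. by rewrite -scaleN1r dotvZl mulN1r. Qed.

Lemma dotvNr u w : dotv w (- u) = - dotv w u.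
Proof. by rewrite dotvC dotvNl dotvC. Qed.

Lemma dotv_ge0 u : 0 <= dotv u u.
Proof. by apply: sumr_ge0 => i _; rewrite -expr2 sqr_ge0. Qed.

Lemma enorm_sq u : enorm u ^+ 2 = dotv u u.
Proof. by rewrite /enorm sqr_sqrtr // dotv_ge0. Qed.

(* Expanding [0 <= dotv (w + s *: u) (w + s *: u)] suffices: no Cauchy-Schwarz. *)
Lemma dotv_ge_of_sq_le s u w : 0 < s ->
  dotv w w <= s ^+ 2 * dotv u u -> - (s * dotv u u) <= dotv w u.
Proof.
move=> s_gt0 le_wu; have := dotv_ge0 (w + s *: u).
rewrite !(dotvDl, dotvDr, dotvZl, dotvZr) (dotvC u w) => sq_ge0.
suff : s * - (s * dotv u u) <= s * dotv w u by rewrite ler_pM2l.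
nra.
Qed.

End InnerProduct.

Ltac expand_dotv := rewrite ?(dotvDl, dotvDr, dotvNl, dotvNr, dotvZl, dotvZr).

Lemma relative_error_descent (R : realType) (d : nat) (lam eps s : R)
    (a b v : 'rV[R]_d) :
  0 < lam ->
  dotv (lam *: v + b) (lam *: v + b) + 2 * lam * eps <= s ^+ 2 * dotv b b ->
  - eps <= dotv (a + b) v ->
  (1 - s ^+ 2) * dotv b b <= dotv a a - dotv (a - lam *: v) (a - lam *: v).
Proof.
move=> lam_gt0; expand_dotv; rewrite (dotvC b v) (dotvC v a) => err enl.
have : 0 <= lam * (dotv a v + dotv v b + eps) by apply: mulr_ge0; lra.
nra.
Qed.

Lemma relative_error_residual (R : realType) (d : nat) (lam eps s : R)
    (b v : 'rV[R]_d) :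
  0 < lam -> 0 < s -> 0 <= eps ->
  dotv (lam *: v + b) (lam *: v + b) + 2 * lam * eps <= s ^+ 2 * dotv b b ->
  lam ^+ 2 * dotv v v <= (1 + s) ^+ 2 * dotv b b.
Proof.
move=> lam_gt0 s_gt0 eps_ge0 err.
rewrite expr2 -mulrA -dotvZr -dotvZl -[lam *: v](addrK b).
move: (lam *: v + b) err => w err.
have le_w : dotv w w <= s ^+ 2 * dotv b b.
  by apply: le_trans _ err; rewrite lerDl !mulr_ge0 // ltW.
move: (dotv_ge_of_sq_le s_gt0 le_w); expand_dotv; rewrite (dotvC b w); nra.
Qed.

Section MinBelowMean.
Variable R : realType.

Lemma exists_argmin_nat (f : nat -> R) k : (1 <= k)%N ->
  exists2 i, (1 <= i <= k)%N & forall j, (1 <= j <= k)%N -> f i <= f j.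
Proof.
case: k => // k _; elim: k => [|k [i ik min_i]].
  by exists 1%N => // j; rewrite -eqn_leq => /eqP <-.
have [le_ik | lt_ki] := leP (f i) (f k.+2).
- exists i; first by case/andP: ik => -> /leqW.
  move=> j /andP[j1]; rewrite leq_eqVlt ltnS => /predU1P[-> // | jk].
  by apply: min_i; rewrite j1.
- exists k.+2; first by rewrite leqnn.
  move=> j /andP[j1]; rewrite leq_eqVlt ltnS => /predU1P[-> // | jk].
  by apply: le_trans (ltW lt_ki) (min_i _ _); rewrite j1.
Qed.

Lemma exists_le_weighted_mean (f w : nat -> R) k : (1 <= k)%N ->
  (forall i, (1 <= i <= k)%N -> 0 <= w i) ->
  exists2 i, (1 <= i <= k)%N &
    f i * \sum_(1 <= j < k.+1) w j <= \sum_(1 <= j < k.+1) w j * f j.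
Proof.
move=> k_ge1 w_ge0; have [i ik min_i] := exists_argmin_nat f k_ge1.
exists i => //; rewrite mulr_sumr; apply: ler_sum_nat => j jk.
by rewrite mulrC ler_wpM2l ?w_ge0 ?min_i.
Qed.

End MinBelowMean.

Lemma le_mul_inf (R : realType) (T : Type) (F : set T) (g : T -> R) (c t : R) :
  0 < c -> F !=set0 -> (forall z, F z -> t <= c * g z) ->
  t <= c * inf [set g z | z in F].
Proof.
move=> c_gt0 [z0 Fz0] le_t; rewrite -ler_pdivrMl //.
apply: lb_le_inf; first by exists (g z0), z0.
by move=> _ [z Fz <-]; rewrite ler_pdivrMl // le_t.
Qed.

Lemma sqrt_le_mul_div (R : realType) (a S C N : R) : 0 <= a -> 0 < S -> 0 <= C ->
  0 <= N -> a * S <= C * N ->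
  Num.sqrt a <= Num.sqrt C * (Num.sqrt S)^-1 * Num.sqrt N.
Proof.
move=> a_ge0 S_gt0 C_ge0 N_ge0 le_aS.
by rewrite mulrAC ler_pdivlMr ?sqrtr_gt0 // -!sqrtrM // ler_sqrt // mulr_ge0.
Qed.

Section HPE.
Variables (R : realType) (d : nat) (A : setop R d) (sigma : R).
Variables (lam eps : nat -> R) (x y v : nat -> 'rV[R]_d).
Hypotheses (sigma_gt0 : 0 < sigma) (sigma_lt1 : sigma < 1).
Hypotheses (lam_gt0 : forall k, 0 < lam k.+1) (eps_ge0 : forall k, 0 <= eps k.+1).
Hypothesis v_enl : forall k, enlargement A (eps k.+1) (y k.+1) (v k.+1).
Hypothesis err : forall k, enorm (lam k.+1 *: v k.+1 + y k.+1 - x k) ^+ 2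
                             + 2 * lam k.+1 * eps k.+1
                           <= sigma ^+ 2 * enorm (y k.+1 - x k) ^+ 2.
Hypothesis x_next : forall k, x k.+1 = x k - lam k.+1 *: v k.+1.

Local Notation gap k := (dotv (y k.+1 - x k) (y k.+1 - x k)).

Let err_dotv k : dotv (lam k.+1 *: v k.+1 + (y k.+1 - x k))
                      (lam k.+1 *: v k.+1 + (y k.+1 - x k))
                 + 2 * lam k.+1 * eps k.+1 <= sigma ^+ 2 * gap k.
Proof. by have := err k; rewrite !enorm_sq -addrA. Qed.

Lemma hpe_fejer z k : A z 0 ->
  (1 - sigma ^+ 2) * gap k
    <= dotv (x k - z) (x k - z) - dotv (x k.+1 - z) (x k.+1 - z).
Proof.
move=> Az; have := v_enl k Az; rewrite subr0 x_next.
have -> : y k.+1 - z = (x k - z) + (y k.+1 - x k) by rewrite [RHS]addrC addrA subrK.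
rewrite [x k - _ - z]addrAC.
exact: relative_error_descent (lam_gt0 k) (err_dotv k).
Qed.

Lemma hpe_gap_sum z n : A z 0 ->
  (1 - sigma ^+ 2) * \sum_(0 <= i < n) gap i <= dotv (x 0%N - z) (x 0%N - z).
Proof.
move=> Az; rewrite mulr_sumr.
apply: le_trans (ler_sum_nat (fun i _ => hpe_fejer i Az)) _.
under eq_bigr do rewrite -opprB.
by rewrite sumrN telescope_sumr // opprB gerBl dotv_ge0.
Qed.

Lemma hpe_weighted_sum_le z (f : nat -> R) (c : R) k : A z 0 -> 0 <= c ->
  (forall i, f i.+1 <= c * gap i) ->
  \sum_(1 <= i < k.+1) f i <= c / (1 - sigma ^+ 2) * dotv (x 0%N - z) (x 0%N - z).
Proof.
move=> Az c_ge0 le_f; have q_gt0 : 0 < 1 - sigma ^+ 2 by move: sigma_gt0 sigma_lt1; nra.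
rewrite big_add1 /=; apply: le_trans (ler_sum_nat (fun i _ => le_f i)) _.
rewrite -mulr_sumr -mulrA; apply: ler_wpM2l => //.
by rewrite ler_pdivlMl // hpe_gap_sum.
Qed.

Lemma hpe_weighted_residual z k : A z 0 ->
  \sum_(1 <= i < k.+1) lam i * (lam i * dotv (v i) (v i))
    <= (1 + sigma) / (1 - sigma) * dotv (x 0%N - z) (x 0%N - z).
Proof.
move=> Az; have -> : (1 + sigma) / (1 - sigma) = (1 + sigma) ^+ 2 / (1 - sigma ^+ 2).
  by field; apply/andP; split; apply/eqP; move: sigma_gt0 sigma_lt1; nra.
apply: hpe_weighted_sum_le => // [|i]; first exact: sqr_ge0.
rewrite mulrA -expr2.
exact: relative_error_residual (lam_gt0 i) sigma_gt0 (eps_ge0 i) (err_dotv i).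
Qed.

Lemma hpe_weighted_eps z k : A z 0 ->
  \sum_(1 <= i < k.+1) lam i * eps i
    <= sigma ^+ 2 / (2 * (1 - sigma ^+ 2)) * dotv (x 0%N - z) (x 0%N - z).
Proof.
move=> Az; rewrite invfM mulrA.
apply: hpe_weighted_sum_le => // [|i]; first by rewrite divr_ge0 ?sqr_ge0.
have := err_dotv i; have := dotv_ge0 (lam i.+1 *: v i.+1 + (y i.+1 - x i)); lra.
Qed.

End HPE.

Theorem lemma4p2 (R : realType) (d : nat) (A : setop R d)
  (p : nat) (sigma theta : R)
  (lam eps : nat -> R) (x y v : nat -> 'rV[R]_d) :
  maximal_monotone A ->
  (exists z : 'rV[R]_d, A z 0) ->
  (1 <= p)%N ->
  0 < sigma -> sigma < 1 -> 0 < theta ->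
  (forall k, 0 < lam k.+1) ->
  (forall k, 0 <= eps k.+1) ->
  (forall k, enlargement A (eps k.+1) (y k.+1) (v k.+1)) ->
  (forall k, enorm (lam k.+1 *: v k.+1 + y k.+1 - x k) ^+ 2
               + 2 * lam k.+1 * eps k.+1
             <= sigma ^+ 2 * enorm (y k.+1 - x k) ^+ 2) ->
  (forall k, lam k.+1 * enorm (y k.+1 - x k) ^+ (p - 1) >= theta) ->
  (forall k, x k.+1 = x k - lam k.+1 *: v k.+1) ->
  forall k : nat, (1 <= k)%N ->
    (exists2 i : nat, (1 <= i <= k)%N &
       Num.sqrt (lam i) * enorm (v i)
       <= Num.sqrt ((1 + sigma) / (1 - sigma))
          * (Num.sqrt (\sum_(1 <= i < k.+1) lam i))^-1
          * inf [set enorm (x 0%N - z) | z in [set z | A z 0]])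
    /\
    (exists2 i : nat, (1 <= i <= k)%N &
       eps i
       <= sigma ^+ 2 / (2 * (1 - sigma ^+ 2))
          * (\sum_(1 <= i < k.+1) lam i)^-1
          * inf [set enorm (x 0%N - z) ^+ 2 | z in [set z | A z 0]]).
Proof.
move=> _ zeros_ne _ sigma_gt0 sigma_lt1 _ lam_gt0 eps_ge0 v_enl err _ x_next k k_ge1.
have lam_ge0 i : (1 <= i <= k)%N -> 0 <= lam i by case: i => // i _; apply/ltW.
have S_gt0 : 0 < \sum_(1 <= i < k.+1) lam i.
  have : 0 <= \sum_(1 <= i < k) lam i.+1 by apply: sumr_ge0 => i _; apply/ltW.
  by rewrite big_nat_recl //; have := lam_gt0 0%N; lra.
have q_gt0 : 0 < 1 - sigma by lra.
split.
- have [i ik le_i] := exists_le_weighted_mean (fun i => lam i * dotv (v i) (v i))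
                                             k_ge1 lam_ge0.
  exists i => //; apply: le_mul_inf => // [|z Az].
    by rewrite mulr_gt0 ?invr_gt0 ?sqrtr_gt0 ?divr_gt0 //; lra.
  rewrite /enorm -sqrtrM ?lam_ge0 //; apply: sqrt_le_mul_div.
  + by rewrite mulr_ge0 ?lam_ge0 ?dotv_ge0.
  + exact: S_gt0.
  + by rewrite divr_ge0 //; lra.
  + exact: dotv_ge0.
  + apply: le_trans le_i _.
    exact: hpe_weighted_residual sigma_gt0 sigma_lt1 lam_gt0 eps_ge0 v_enl err x_next _ _ Az.
- have [i ik le_i] := exists_le_weighted_mean eps k_ge1 lam_ge0.
  exists i => //; apply: le_mul_inf => // [|z Az].
    by rewrite mulr_gt0 ?invr_gt0 ?divr_gt0 //; nra.
  rewrite enorm_sq mulrAC ler_pdivlMr //; apply: le_trans le_i _.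
  exact: hpe_weighted_eps sigma_gt0 sigma_lt1 lam_gt0 v_enl err x_next _ _ Az.
Qed.
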